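(* Under the standing setting and assumptions (A1)–(A3) described in the context, assume $\mathcal A$ is strictly convex and $\mathcal R(X)\neq\emptyset$ for all $X\in\mathcal X$. Then $|\mathcal R(X)|=1$ for all $X\in\mathcal X$.
   Context: Let $\mathcal X$ be a Hausdorff, first countable, locally convex topological vector space over $\mathbb R$, partially ordered by a partial order $\geq$ with positive cone $\mathcal X_+=\{X\in\mathcal X: X\geq 0\}$. Let $\mathcal M\subset\mathcal X$ be a vector subspace with $1<\dim\mathcal M<\infty$, carrying the relative topology, and let $\pi:\mathcal M\to\mathbb R$ be linear. Standing assumptions: (A1) there is $U\in\mathcal M\cap\mathcal X_+$ with $\pi(U)=1$; (A2) $\mathcal A\subsetneq\mathcal X$ is closed, contains $0$, and satisfies $\mathcal A+\mathcal X_+\subset\mathcal A$; (A3) the map $\rho(X)=\inf\{\pi(Z): Z\in\mathcal M,\ X+Z\in\mathcal A\}$ is finitely valued and continuous on $\mathcal X$. The optimal payoff map is $\mathcal R(X)=\{Z\in\mathcal M: X+Z\in\mathcal A,\ \pi(Z)=\rho(X)\}$; $|\cdot|$ is cardinality. $\mathcal A$ is strictly convex if $\lambda X+(1-\lambda)Y\in\mathrm{int}\,\mathcal A$ for all $\lambda\in(0,1)$ and all distinct $X,Y\in\mathcal A$. *)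

From HB Require Import structures.
From mathcomp Require Import all_boot all_order all_algebra.
From mathcomp Require Import all_classical all_reals all_analysis.
Set Implicit Arguments. Unset Strict Implicit. Unset Printing Implicit Defensive.
Import Order.TTheory GRing.Theory Num.Theory.
Local Open Scope classical_set_scope.
Local Open Scope ring_scope.

Section defs.
Context {R : realType} {X : tvsType R}.

Definition first_countable : Prop :=
  forall x : X, exists B : nat -> set X,
    (forall n, nbhs x (B n)) /\ (forall U, nbhs x U -> exists n, B n `<=` U).

Definition is_partial_order (ge : X -> X -> Prop) : Prop :=
  (forall x, ge x x) /\ (forall x y, ge x y -> ge y x -> x = y) /\
  (forall x y z, ge x y -> ge y z -> ge x z).

Definition pos_cone (ge : X -> X -> Prop) : set X := [set x | ge x 0].

Definition is_subspace (M : set X) : Prop :=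
  M 0 /\ (forall (a : R) x y, M x -> M y -> M (a *: x + y)).

Definition has_dim (M : set X) (n : nat) : Prop :=
  exists b : 'I_n -> X,
    (forall i, M (b i)) /\
    (forall c : 'I_n -> R, \sum_(i < n) c i *: b i = 0 -> forall i, c i = 0) /\
    (forall x, M x -> exists c : 'I_n -> R, x = \sum_(i < n) c i *: b i).

(* pi is linear on M (only its values on M matter) *)
Definition linear_on (M : set X) (pi : X -> R) : Prop :=
  forall (a : R) x y, M x -> M y -> pi (a *: x + y) = a * pi x + pi y.

Definition rho_set (M A : set X) (pi : X -> R) (x : X) : set (\bar R) :=
  [set (pi z)%:E | z in [set z | M z /\ A (x + z)]].

Definition rho_ext (M A : set X) (pi : X -> R) (x : X) : \bar R :=
  ereal_inf (rho_set M A pi x).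

(* real-valued rho (meaningful when rho_ext is finite, as assumed in (A3)) *)
Definition rho (M A : set X) (pi : X -> R) (x : X) : R :=
  fine (rho_ext M A pi x).

Definition optimal_payoff (M A : set X) (pi : X -> R) (x : X) : set X :=
  [set z | M z /\ A (x + z) /\ pi z = rho M A pi x].

Definition strictly_convex (A : set X) : Prop :=
  forall (l : R) x y, 0 < l < 1 -> A x -> A y -> x <> y ->
    interior A (l *: x + (1 - l) *: y).

End defs.

From HB Require Import structures.
From mathcomp Require Import all_boot all_order all_algebra.
From mathcomp Require Import all_classical all_reals all_analysis.
From mathcomp Require Import lra.
Import Order.TTheory GRing.Theory Num.Theory numFieldTopology.Exports numFieldNormedType.Exports.
Local Open Scope classical_set_scope.
Local Open Scope ring_scope.

(* If z <> Z were both optimal for X, strict convexity would put X + w, with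
   w their midpoint, in the interior of A, while w still has price rho(X).
   Moving a little from w in the direction -U keeps X + w - eU in A and lowers
   the price by e pi(U) = e > 0, contradicting the minimality of rho(X).
   Besides strict convexity, only (A1) and the finiteness of rho are used. *)

Section line_in_tvs.
Context {R : realType} {X : tvsType R}.

Lemma line_continuous (p u : X) : continuous (fun t : R^o => p + t *: u).
Proof.
move=> t.
apply: (@continuous_comp R^o (X * X)%type X (fun s => (p, s *: u))
  (fun x => x.1 + x.2)); last exact: add_continuous.
apply: (@cvg_pair _ _ _ _ (nbhs p)); first exact: cvg_cst.
apply: (@continuous_comp R^o (R^o * X)%type X (fun s => (s, u))
  (fun x => x.1 *: x.2)); last exact: scale_continuous.
by apply: (@cvg_pair _ _ _ _ (nbhs t)); [exact: cvg_id | exact: cvg_cst].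
Qed.

Lemma nbhs_sub_scale {A : set X} {p : X} (u : X) :
  nbhs p A -> exists2 e : R, 0 < e & A (p - e *: u).
Proof.
move=> pA.
have /nbhs_ballP[e /= e0 eA] :
    nbhs (0 : R^o) ((fun t : R^o => p + t *: u) @^-1` A).
  by apply: line_continuous; rewrite scale0r addr0.
exists (e / 2); first by rewrite divr_gt0.
rewrite -scaleNr; apply: eA.
by rewrite -ball_normE /= sub0r opprK ger0_norm ?ltr_pdivrMr ?ltr_pMr ?ltr1n
  ?divr_ge0 ?ltW.
Qed.

Lemma scalerDr_convex (l : R) (x y z : X) :
  l *: (x + y) + (1 - l) *: (x + z) = x + (l *: y + (1 - l) *: z).
Proof. by rewrite !scalerDr addrACA -scalerDl subrKC scale1r. Qed.

End line_in_tvs.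

Section optimal_payoff_unique.
Context {R : realType} {X : tvsType R} {M A : set X} { pi : X -> R }.
Hypothesis subM : is_subspace M.
Hypothesis linpi : linear_on M pi.

Lemma subspaceZ (a : R) {y} : M y -> M (a *: y).
Proof. by move=> My; have := subM.2 a y 0 My subM.1; rewrite addr0. Qed.

Lemma subspace_convex (l : R) {y z} : M y -> M z -> M (l *: y + (1 - l) *: z).
Proof. by move=> My Mz; apply: subM.2 => //; exact: subspaceZ. Qed.

Lemma linear_on0 : pi 0 = 0.
Proof.
by have := linpi 1 0 0 subM.1 subM.1; rewrite scale1r addr0 mul1r; lra.
Qed.

Lemma linear_onZ (a : R) {y} : M y -> pi (a *: y) = a * pi y.
Proof.
by move=> My; have := linpi a y 0 My subM.1; rewrite !addr0 linear_on0 addr0.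
Qed.

Lemma linear_on_convex (l : R) {y z} : M y -> M z ->
  pi (l *: y + (1 - l) *: z) = l * pi y + (1 - l) * pi z.
Proof. by move=> My Mz; rewrite linpi ?linear_onZ //; exact: subspaceZ. Qed.

Lemma rho_le {x z : X} : rho_ext M A pi x \is a fin_num ->
  M z -> A (x + z) -> rho M A pi x <= pi z.
Proof.
move=> finx Mz Axz; rewrite -lee_fin /rho fineK //.
by apply: ereal_inf_lbound; exists z.
Qed.

Lemma rho_lt_interior {U x w : X} : M U -> 0 < pi U ->
  rho_ext M A pi x \is a fin_num ->
  M w -> interior A (x + w) -> rho M A pi x < pi w.
Proof.
move=> MU piU finx Mw /(nbhs_sub_scale U)[e e0 Ae].
have Mw' : M (w - e *: U) by rewrite addrC -scaleNr; exact: subM.2.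
have := rho_le finx Mw'; rewrite addrA => /(_ Ae).
rewrite addrC -scaleNr linpi // mulNr.
by move: (mulr_gt0 e0 piU); lra.
Qed.

Lemma optimal_payoff_eq {U x z z' : X} : M U -> 0 < pi U ->
  rho_ext M A pi x \is a fin_num -> strictly_convex A ->
  optimal_payoff M A pi x z -> optimal_payoff M A pi x z' -> z = z'.
Proof.
move=> MU piU finx convA [Mz [Az piz]] [Mz' [Az' piz']].
apply: contrapT => neq.
have half_in01 : 0 < (2^-1 : R) < 1 by apply/andP; split; lra.
have Aint := convA _ _ _ half_in01 Az Az' (contra_not (@addrI _ x _ _) neq).
rewrite scalerDr_convex in Aint.
have := rho_lt_interior MU piU finx (subspace_convex _ Mz Mz') Aint.
by rewrite linear_on_convex // piz piz'; lra.
Qed.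

End optimal_payoff_unique.

Theorem mainTheorem14 (R : realType) (X : tvsType R)
  (ge : X -> X -> Prop) (M : set X) (n : nat) (pi : X -> R) (A : set X) :
  hausdorff_space X ->
  first_countable (X := X) ->
  is_partial_order ge ->
  is_subspace M -> (1 < n)%N -> has_dim M n ->
  linear_on M pi ->
  (* (A1) *)
  (exists U, M U /\ pos_cone ge U /\ pi U = 1) ->
  (* (A2) *)
  closed A -> A 0 -> A != [set: X] ->
  (forall a p, A a -> pos_cone ge p -> A (a + p)) ->
  (* (A3) *)
  (forall x, rho_ext M A pi x \is a fin_num) ->
  continuous (rho M A pi) ->
  (* theorem hypotheses *)
  strictly_convex A ->
  (forall x, optimal_payoff M A pi x !=set0) ->
  forall x, exists Z, optimal_payoff M A pi x = [set Z].
Proof.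
move=> _ _ _ subM _ _ linpi [U [MU [_ piU]]] _ _ _ _ fin _ convA nonempty x.
have [Z optZ] := nonempty x.
exists Z; apply/seteqP; split=> [z optz | z ->] //=.
have piU_gt0 : 0 < pi U by rewrite piU ltr01.
exact: (optimal_payoff_eq subM linpi MU piU_gt0 (fin x) convA).
Qed.
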